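(* Let $a_1,\dots,a_m\in\mathbb R^n$ satisfy $\mathbb E_{i\in[m]}\|a_i\|_2^4\ge1$ and let $A=\sum_{i=1}^m e_ia_i^T/\sqrt n$. Then $\|A\|_{2\to4}\ge\left(\frac{3}{1+2/n}\right)^{1/4}$.
   Context: $e_i$ is the $i$-th standard basis vector of $\mathbb R^m$, so $(Ax)_i=\frac1{\sqrt n}\sum_{j}a_{i,j}x_j$. Norms are expectation norms: for $v\in\mathbb R^N$, $\|v\|_p=(\frac1N\sum_{j}|v_j|^p)^{1/p}$, and $\|A\|_{2\to4}=\max_{x\ne0}\|Ax\|_4/\|x\|_2$; $\mathbb E_{i\in[m]}$ is the uniform average over $i$. *)

From HB Require Import structures.
From mathcomp Require Import all_boot all_order all_algebra.
From mathcomp Require Import all_classical all_reals all_analysis.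
Set Implicit Arguments. Unset Strict Implicit. Unset Printing Implicit Defensive.
Import Order.TTheory GRing.Theory Num.Theory.
Local Open Scope ring_scope.
Local Open Scope classical_set_scope.

(* Expectation norm of v in R^N (column vector):
   ||v||_p = ((1/N) sum_j |v_j|^p)^(1/p). *)
Definition enorm (R : realType) (N : nat) (p : R) (v : 'cV[R]_N) : R :=
  ((N%:R)^-1 * \sum_(j < N) `|v j 0| `^ p) `^ p^-1.

Definition opnorm24 (R : realType) (m n : nat) (A : 'M[R]_(m, n)) : R :=
  sup [set enorm 4 (A *m x) / enorm 2 x | x in [set x : 'cV[R]_n | x != 0]].

Definition e_ {R : realType} {m : nat} (i : 'I_m) : 'cV[R]_m := delta_mx i 0.

From HB Require Import structures.
From mathcomp Require Import all_boot all_order all_algebra.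
From mathcomp Require Import all_classical all_reals all_analysis.
From mathcomp Require Import ring lra.
Set Implicit Arguments.
Unset Strict Implicit.
Unset Printing Implicit Defensive.
Import Order.TTheory GRing.Theory Num.Theory.
Local Open Scope ring_scope.

(* Let Phi(x) = sum_i <a_i, x>^4 and T = sum_i |a_i|^4.  For a uniform random
   sign vector s, E Phi(s) = 3 T - 2 sum_(i,j) a_ij^4 = 3 T - 2 sum_j Phi(e_j),
   since only the even monomials of <a_i, s>^4 survive.  Hence
   E Phi(s) + 2 sum_j Phi(e_j) = 3 T, while E |s|^4 + 2 sum_j |e_j|^4 = n(n+2),
   so some s or some e_j satisfies n (n + 2) Phi(x) >= 3 T |x|^4.  In
   expectation norms that vector has ||A x||_4^4 / ||x||_2^4 >= 3 T / (m n (n + 2)),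
   and the hypothesis says exactly T >= m n^2. *)

Section RealFacts.
Variable R : realType.

Lemma exists_ge_mean (I : finType) (i0 : I) (F : I -> R) :
  exists i, \sum_j F j <= #|I|%:R * F i.
Proof.
exists [arg max_(i > i0) F i]%O; case: arg_maxP => // i _ iF.
apply: (@le_trans _ _ (\sum_(j : I) F i)); first by apply: ler_sum => j _; apply: iF.
by rewrite sumr_const mulr_natl.
Qed.

Lemma cauchy_schwarz n (u v : 'I_n -> R) :
  (\sum_j u j * v j) ^+ 2 <= (\sum_j u j ^+ 2) * (\sum_j v j ^+ 2).
Proof.
rewrite expr2 !mulr_suml.
under eq_bigr do rewrite mulr_sumr.
under [X in _ <= X]eq_bigr do rewrite mulr_sumr.
have -> : \sum_i \sum_j u i ^+ 2 * v j ^+ 2 =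
          \sum_i \sum_j (u i ^+ 2 * v j ^+ 2 + u j ^+ 2 * v i ^+ 2) / 2.
  under [RHS]eq_bigr do rewrite -mulr_suml big_split /=.
  rewrite -mulr_suml big_split /= [X in _ = (_ + X) / 2]exchange_big /=.
  by field.
apply: ler_sum => i _; apply: ler_sum => j _.
rewrite ler_pdivlMr //; have := sqr_ge0 (u i * v j - u j * v i); nra.
Qed.

Lemma exprn_powR_inv (a : R) k : (0 < k)%N -> 0 <= a -> (a `^ k%:R^-1) ^+ k = a.
Proof.
move=> k_gt0 a_ge0; rewrite -powR_mulrn ?powR_ge0 // -powRrM mulVf ?powRr1 //.
by rewrite pnatr_eq0 -lt0n.
Qed.

Lemma powR_inv4_le_div (c r s : R) : 0 <= c -> 0 <= r -> 0 < s ->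
  c * s ^+ 4 <= r ^+ 4 -> c `^ 4^-1 <= r / s.
Proof.
move=> c_ge0 r_ge0 s_gt0 crs; rewrite ler_pdivlMr //.
rewrite -(@ler_pXn2r _ 4) ?nnegrE ?mulr_ge0 ?powR_ge0 ?(ltW s_gt0) //.
by rewrite exprMn exprn_powR_inv.
Qed.

Lemma div_le_of_pow4_le (r s C : R) : 0 <= r -> 0 <= s -> 0 <= C ->
  r ^+ 4 <= C * s ^+ 4 -> r / s <= 1 + C.
Proof.
move=> r_ge0 s_ge0 C_ge0 rCs; have [->|s_neq0] := eqVneq s 0.
  by rewrite invr0 mulr0; lra.
have s_gt0 : 0 < s by rewrite lt_def s_neq0.
rewrite ler_pdivrMr // -(@ler_pXn2r _ 4) ?nnegrE ?mulr_ge0 ?addr_ge0 //.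
rewrite exprMn; apply: (le_trans rCs); rewrite ler_wpM2r ?exprn_ge0 //.
have C1 : 1 <= 1 + C by lra.
have := exprn_ege1 3 C1; rewrite exprS; nra.
Qed.

End RealFacts.

Section SignAverage.
Variable R : realType.

Fixpoint sign_avg (k : nat) (f : seq R -> R) : R :=
  if k is k'.+1 then
    (sign_avg k' (fun s => f (1 :: s)) + sign_avg k' (fun s => f (-1 :: s))) / 2
  else f [::].

Lemma eq_sign_avg k (f g : seq R -> R) : f =1 g -> sign_avg k f = sign_avg k g.
Proof.
elim: k f g => [|k IH] f g fg /=; first exact: fg.
by congr ((_ + _) / 2); apply: IH => s; apply: fg.
Qed.

Lemma sign_avg_sum k (I : finType) (f : I -> seq R -> R) :
  sign_avg k (fun s => \sum_i f i s) = \sum_i sign_avg k (f i).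
Proof.
elim: k f => [|k IH] f //=.
by rewrite (IH (fun i s => f i (1 :: s))) (IH (fun i s => f i (-1 :: s))) -big_split mulr_suml.
Qed.

Lemma sign_avg_le k (f : seq R -> R) :
  exists2 s, forall j, (j < k)%N -> s`_j ^+ 2 = 1 & sign_avg k f <= f s.
Proof.
elim: k f => [|k IH] f /=; first by exists [::].
have [s1 s1E le1] := IH (fun s => f (1 :: s)).
have [s2 s2E le2] := IH (fun s => f (-1 :: s)).
have [le12|lt21] := lerP (f (1 :: s1)) (f (-1 :: s2)).
- exists (-1 :: s2); first by case=> [|j] /=; [rewrite sqrrN expr1n | exact: s2E].
  by rewrite ler_pdivrMr //; lra.
- exists (1 :: s1); first by case=> [|j] /=; [rewrite expr1n | exact: s1E].
  by rewrite ler_pdivrMr //; lra.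
Qed.

Lemma sign_avg_quartic k (l : 'I_k -> R) (c : R) :
  sign_avg k (fun s => (c + \sum_(j < k) l j * s`_j) ^+ 4) =
  c ^+ 4 + 6 * c ^+ 2 * (\sum_j l j ^+ 2) + 3 * (\sum_j l j ^+ 2) ^+ 2
    - 2 * \sum_j l j ^+ 4.
Proof.
elim: k l c => [|k IH] l c /=; first by rewrite !big_ord0; ring.
pose l' (j : 'I_k) := l (lift ord0 j).
have shift e : (fun s => (c + \sum_(j < k.+1) l j * (e :: s)`_j) ^+ 4) =1
               (fun s => ((c + l ord0 * e) + \sum_(j < k) l' j * s`_j) ^+ 4).
  by move=> s; rewrite big_ord_recl addrA.
by rewrite (eq_sign_avg _ (shift 1)) (eq_sign_avg _ (shift (-1))) !IH !big_ord_recl; field.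
Qed.

End SignAverage.

Section ColumnVectors.
Variables (R : realType) (n : nat).
Implicit Types (u v x : 'cV[R]_n).

Definition dotv u v : R := \sum_j u j 0 * v j 0.
Definition sqnorm x : R := \sum_j x j 0 ^+ 2.

Lemma sqnorm_ge0 x : 0 <= sqnorm x.
Proof. by apply: sumr_ge0 => j _; apply: sqr_ge0. Qed.

Lemma sqnorm_eq0 x : (sqnorm x == 0) = (x == 0).
Proof.
apply/eqP/eqP => [x0|->]; last by rewrite /sqnorm big1 // => j _; rewrite mxE expr0n.
apply/matrixP => i j; rewrite ord1 mxE; apply/eqP; rewrite -sqrf_eq0; apply/eqP.
exact: (psumr_eq0P (fun j _ => sqr_ge0 (x j 0)) x0).
Qed.

Lemma sqnorm_gt0 x : (0 < sqnorm x) = (x != 0).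
Proof. by rewrite lt0r sqnorm_ge0 andbT sqnorm_eq0. Qed.

Lemma dim_gt0 x : x != 0 -> (0 < n)%N.
Proof.
apply: contraNT; rewrite -eqn0Ngt => /eqP n0; apply/eqP/matrixP => i.
by move: (ltn_ord i); rewrite {2}n0.
Qed.

Lemma dotv_pow4_le u v : dotv u v ^+ 4 <= sqnorm u ^+ 2 * sqnorm v ^+ 2.
Proof.
rewrite -exprMn (_ : 4%N = 2 * 2)%N // exprM ler_pXn2r ?nnegrE ?sqr_ge0 //.
  exact: cauchy_schwarz.
by rewrite mulr_ge0 ?sqnorm_ge0.
Qed.

Lemma dotv_delta u (j : 'I_n) : dotv u (delta_mx j 0) = u j 0.
Proof.
rewrite /dotv (bigD1 j) //= big1 ?addr0; first by rewrite mxE !eqxx mulr1.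
by move=> k /negbTE k_neq_j; rewrite mxE k_neq_j mulr0.
Qed.

Lemma sqnorm_delta (j : 'I_n) : sqnorm (delta_mx j 0) = 1.
Proof.
rewrite /sqnorm (bigD1 j) //= big1 ?addr0; first by rewrite mxE !eqxx expr1n.
by move=> k /negbTE k_neq_j; rewrite mxE k_neq_j expr0n.
Qed.

Lemma sqnorm_signs (s : seq R) : (forall j, (j < n)%N -> s`_j ^+ 2 = 1) ->
  sqnorm (\col_j s`_j) = n%:R.
Proof.
move=> s_sign; rewrite /sqnorm (eq_bigr (fun=> 1)) ?sumr_const ?card_ord //.
by move=> j _; rewrite mxE s_sign.
Qed.

Lemma enorm_nat_pow (p : nat) v : (0 < p)%N ->
  enorm p%:R v ^+ p = n%:R^-1 * \sum_j `|v j 0| ^+ p.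
Proof.
move=> p_gt0; rewrite exprn_powR_inv //.
  by congr (_ * _); apply: eq_bigr => j _; rewrite powR_mulrn.
by rewrite mulr_ge0 ?invr_ge0 // sumr_ge0 // => j _; rewrite powR_ge0.
Qed.

Lemma enorm2_sqr x : enorm 2 x ^+ 2 = n%:R^-1 * sqnorm x.
Proof.
rewrite enorm_nat_pow //; congr (_ * _); apply: eq_bigr => j _.
by rewrite real_normK ?num_real.
Qed.

Lemma enorm4_pow4 v : enorm 4 v ^+ 4 = n%:R^-1 * \sum_j v j 0 ^+ 4.
Proof.
rewrite enorm_nat_pow //; congr (_ * _); apply: eq_bigr => j _.
by rewrite -normrX ger0_norm // (_ : 4%N = 2 * 2)%N // exprM sqr_ge0.
Qed.

Lemma enorm2_pow4 x : enorm 2 x ^+ 4 = n%:R^-1 ^+ 2 * sqnorm x ^+ 2.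
Proof. by rewrite (_ : 4%N = 2 * 2)%N // exprM enorm2_sqr exprMn. Qed.

Lemma enorm2_gt0 x : x != 0 -> 0 < enorm 2 x.
Proof.
move=> x_neq0; have n_gt0 := dim_gt0 x_neq0.
rewrite lt0r powR_ge0 andbT; apply: contra x_neq0 => /eqP x0.
have := enorm2_sqr x; rewrite x0 expr0n /= => /esym/eqP.
by rewrite mulf_eq0 invr_eq0 pnatr_eq0 eqn0Ngt n_gt0 sqnorm_eq0.
Qed.

End ColumnVectors.

Section OperatorNorm.
Variables (R : realType) (m n : nat).
Implicit Types (A : 'M[R]_(m, n)) (x : 'cV[R]_n).

Lemma mulmx_col_dotv A x i : (A *m x) i 0 = dotv (row i A)^T x.
Proof. by rewrite mxE; apply: eq_bigr => j _; rewrite !mxE. Qed.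

Lemma enorm4_mulmx_le A x : x != 0 ->
  enorm 4 (A *m x) ^+ 4 <=
    (n%:R ^+ 2 * (m%:R^-1 * \sum_i sqnorm (row i A)^T ^+ 2)) * enorm 2 x ^+ 4.
Proof.
move=> x_neq0; have n_gt0 : 0 < n%:R :> R by rewrite ltr0n (dim_gt0 x_neq0).
rewrite enorm4_pow4 enorm2_pow4; set S := \sum_i sqnorm _ ^+ 2; set q := sqnorm x.
have -> : n%:R ^+ 2 * (m%:R^-1 * S) * (n%:R^-1 ^+ 2 * q ^+ 2) = m%:R^-1 * (S * q ^+ 2).
  have nK : n%:R ^+ 2 * n%:R^-1 ^+ 2 = 1 :> R by rewrite -exprMn mulfV ?gt_eqF ?expr1n.
  by rewrite mulrACA nK mul1r -mulrA.
rewrite ler_wpM2l ?invr_ge0 // mulr_suml.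
by apply: ler_sum => i _; rewrite mulmx_col_dotv dotv_pow4_le.
Qed.

Lemma opnorm24_ge A x : x != 0 -> enorm 4 (A *m x) / enorm 2 x <= opnorm24 A.
Proof.
move=> x_neq0; apply: ub_le_sup; last by exists x.
pose C := n%:R ^+ 2 * (m%:R^-1 * \sum_i sqnorm (row i A)^T ^+ 2).
have C_ge0 : 0 <= C.
  by rewrite mulr_ge0 ?exprn_ge0 ?mulr_ge0 ?invr_ge0 ?sumr_ge0 // => i _; rewrite sqr_ge0.
exists (1 + C) => _ [y y_neq0 <-].
by apply: div_le_of_pow4_le; rewrite ?powR_ge0 // enorm4_mulmx_le.
Qed.

End OperatorNorm.

Section QuarticForm.
Variables (R : realType) (m n : nat) (a : 'I_m -> 'cV[R]_n).

Definition quartic (x : 'cV[R]_n) : R := \sum_i dotv (a i) x ^+ 4.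

Lemma sum_quartic_delta :
  \sum_(j < n) quartic (delta_mx j 0) = \sum_i \sum_j a i j 0 ^+ 4.
Proof.
rewrite exchange_big; apply: eq_bigr => i _; apply: eq_bigr => j _.
by rewrite dotv_delta.
Qed.

Lemma sign_avg_quartic_col :
  sign_avg n (fun s => quartic (\col_j s`_j)) =
  3 * \sum_i sqnorm (a i) ^+ 2 - 2 * \sum_i \sum_j a i j 0 ^+ 4.
Proof.
have col_dotv i s : dotv (a i) (\col_j s`_j) = 0 + \sum_j a i j 0 * s`_j.
  by rewrite add0r; apply: eq_bigr => j _; rewrite mxE.
rewrite (@eq_sign_avg _ _ _ (fun s => \sum_i (0 + \sum_j a i j 0 * s`_j) ^+ 4)); last first.
  by move=> s; apply: eq_bigr => i _; rewrite col_dotv.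
rewrite sign_avg_sum mulr_sumr mulr_sumr -sumrB; apply: eq_bigr => i _.
by rewrite sign_avg_quartic /sqnorm; ring.
Qed.

Lemma exists_quartic_ge : (0 < n)%N ->
  exists2 x, x != 0 &
    3 * (\sum_i sqnorm (a i) ^+ 2) * sqnorm x ^+ 2 <= n%:R * (n%:R + 2) * quartic x.
Proof.
move=> n_gt0; have N_gt0 : 0 < n%:R :> R by rewrite ltr0n.
have [s s_sign s_ge] := sign_avg_le n (fun s => quartic (\col_j s`_j)).
have [j j_ge] := exists_ge_mean (Ordinal n_gt0) (fun j => quartic (delta_mx j 0)).
rewrite sign_avg_quartic_col in s_ge; rewrite card_ord sum_quartic_delta in j_ge.
set T := \sum_i sqnorm _ ^+ 2 in s_ge *.
have [s_good|s_bad] := lerP (3 * T * n%:R ^+ 2) (n%:R * (n%:R + 2) * quartic (\col_j s`_j)).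
  exists (\col_j s`_j); last by rewrite sqnorm_signs.
  by rewrite -sqnorm_gt0 sqnorm_signs // ltr0n.
exists (delta_mx j 0); first by rewrite -sqnorm_gt0 sqnorm_delta.
by rewrite sqnorm_delta expr1n; nra.
Qed.

Lemma rows_mulmx_entry x i :
  (((Num.sqrt n%:R)^-1 *: \sum_(k < m) ((e_ k : 'cV[R]_m) *m (a k)^T)) *m x) i 0 =
  (Num.sqrt n%:R)^-1 * dotv (a i) x.
Proof.
rewrite -scalemxAl mxE mulmx_suml summxE (bigD1 i) //= big1 ?addr0 => [|k k_neq_i].
  rewrite -mulmxA mxE big_ord1 !mxE !eqxx mul1r /dotv.
  by under eq_bigr do rewrite mxE.
by rewrite -mulmxA mxE big_ord1 !mxE eq_sym (negbTE k_neq_i) mul0r.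
Qed.

Lemma enorm4_rows_mulmx x :
  enorm 4 (((Num.sqrt n%:R)^-1 *: \sum_(k < m) ((e_ k : 'cV[R]_m) *m (a k)^T)) *m x) ^+ 4
  = m%:R^-1 * (n%:R^-1 ^+ 2 * quartic x).
Proof.
rewrite enorm4_pow4 /quartic [in RHS]mulr_sumr; congr (_ * _); apply: eq_bigr => i _.
rewrite rows_mulmx_entry exprMn; congr (_ * _).
by rewrite !exprVn (_ : 4%N = 2 * 2)%N // exprM sqr_sqrtr.
Qed.

End QuarticForm.

Theorem lemma7p4 (R : realType) (m n : nat) (a : 'I_m -> 'cV[R]_n) :
  (0 < m)%N -> (0 < n)%N ->
  1 <= (m%:R)^-1 * \sum_(i < m) (enorm 2 (a i)) ^+ 4 ->
  (3 / (1 + 2 / n%:R)) `^ (4%:R^-1) <=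
    opnorm24 ((Num.sqrt (n%:R))^-1 *: \sum_(i < m) ((e_ i : 'cV[R]_m) *m (a i)^T)).
Proof.
move=> m_gt0 n_gt0 hyp.
have M_gt0 : 0 < m%:R :> R by rewrite ltr0n.
have N_gt0 : 0 < n%:R :> R by rewrite ltr0n.
set T := \sum_i sqnorm (a i) ^+ 2.
have T_ge : m%:R * n%:R ^+ 2 <= T.
  move: hyp; under eq_bigr do rewrite enorm2_pow4; rewrite -mulr_sumr -/T.
  by rewrite ler_pdivlMl // mulr1 -ler_pdivlMr ?exprn_gt0 // mulrC exprVn.
have [x x_neq0 x_good] := exists_quartic_ge a n_gt0.
apply: le_trans (opnorm24_ge _ x_neq0).
apply: powR_inv4_le_div; rewrite ?powR_ge0 ?enorm2_gt0 //.
rewrite enorm4_rows_mulmx enorm2_pow4; set q := sqnorm x; set P := quartic a x.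
have -> : 3 / (1 + 2 / n%:R) * (n%:R^-1 ^+ 2 * q ^+ 2) =
          3 * (m%:R * n%:R ^+ 2) * q ^+ 2 / (m%:R * n%:R ^+ 2 * n%:R * (n%:R + 2)).
  by field; rewrite ?gt_eqF //; lra.
have -> : m%:R^-1 * (n%:R^-1 ^+ 2 * P) = n%:R * (n%:R + 2) * P / (m%:R * n%:R ^+ 2 * n%:R * (n%:R + 2)).
  by field; rewrite ?gt_eqF //; lra.
apply: ler_wpM2r; first by rewrite invr_ge0 !mulr_ge0 ?exprn_ge0 //; lra.
by apply: le_trans x_good; rewrite ler_wpM2r ?sqr_ge0 // ler_wpM2l.
Qed.
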